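(* Let $G=(V,E)$ be a connected graph which is either finite or infinite with bounded degrees, let $n=|V|\in\mathbb N\cup\{\infty\}$, let $o\in V$ and let $(m_t)_{t\ge0}$ be the fragmentation process originating at $o$. Let $t>0$ and suppose that $Q_t\ge 2/n$ (this holds automatically if $V$ is infinite, interpreting $2/n=0$). Then $\mathcal{E}_t\ge Q_t^3/8$.
   Context: Fragmentation process originating at $o$: $m_t:V\to[0,1]$, with $m_0(o)=1$ and $m_0(v)=0$ for $v\neq o$. Each edge carries an independent rate-one Poisson clock; when the clock of edge $\{u,v\}$ rings at time $t$, set $m_t(u)=m_t(v)=\frac{m_{t-}(u)+m_{t-}(v)}{2}$ (with $m_{t-}(u)=\lim_{s\uparrow t}m_s(u)$), other values unchanged. Define $Q_t:=\sum_{v\in V}m_t(v)^2$ and $\mathcal E_t:=\sum_{\{u,v\}\in E}(m_t(u)-m_t(v))^2$. *)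

From HB Require Import structures.
From mathcomp Require Import all_boot all_order all_algebra.
From mathcomp Require Import all_classical all_reals.
From mathcomp Require Import ereal esum.
Set Implicit Arguments. Unset Strict Implicit. Unset Printing Implicit Defensive.
Import Order.TTheory GRing.Theory Num.Theory.
Local Open Scope ring_scope.

Definition simple_graph (V : Type) (adj : rel V) : Prop :=
  (forall u v, adj u v = adj v u) /\ (forall u, adj u u = false).

Definition connected_graph (V : Type) (adj : rel V) : Prop :=
  forall u v : V, exists s : seq V, path adj u s /\ last u s = v.

Definition bounded_degree (V : eqType) (adj : rel V) : Prop :=
  exists D : nat, forall u : V, exists s : seq V,
    (size s <= D)%N /\ (forall v, adj u v -> v \in s).

(* hypothesis "Q >= 2/n" with n = |V| in N u {oo}, 2/oo = 0:
   if V is finite, enumerated without repetition by s (so n = size s),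
   then Q * n >= 2; vacuous when V is infinite. *)
Definition Q_ge_2_over_n (V : eqType) (R : realType) (Q : \bar R) : Prop :=
  forall s : seq V, uniq s -> (forall v, v \in s) ->
    (2%:R%:E <= Q * (size s)%:R%:E)%E.

Definition m_init (V : eqType) (R : realType) (o : V) : V -> R :=
  fun w => if w == o then 1 else 0.

Definition ring_edge (V : eqType) (R : realType) (m : V -> R) (e : V * V)
  : V -> R :=
  fun w => if (w == e.1) || (w == e.2) then (m e.1 + m e.2) / 2 else m w.

(* A realization of the clock rings during [0,t]: a finite list of
   (ring time, edge) events, with strictly increasing times in (0,t], every
   ringing pair being an edge of the graph. *)
Definition ring_record (V : eqType) (R : realType) (adj : rel V) (t : R)
  (ev : seq (R * (V * V))) : Prop :=
  sorted (fun a b => a.1 < b.1) ev /\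
  (forall a, a \in ev -> 0 < a.1 <= t /\ adj a.2.1 a.2.2).

(* m_t along such a realization: apply the averaging steps in time order *)
Definition frag_state (V : eqType) (R : realType) (o : V)
  (ev : seq (R * (V * V))) : V -> R :=
  foldl (fun m a => ring_edge m a.2) (m_init R o) ev.

Definition Qsum (V : choiceType) (R : realType) (m : V -> R) : \bar R :=
  (\esum_(v in [set: V]) ((m v) ^+ 2)%:E)%E.

(* E_t = sum over unordered edges {u,v} of (m(u)-m(v))^2, written as half the
   sum over ordered adjacent pairs *)
Definition Esum (V : choiceType) (R : realType) (adj : rel V) (m : V -> R)
  : \bar R :=
  ((\esum_(p in [set p : V * V | adj p.1 p.2]) ((m p.1 - m p.2) ^+ 2)%:E)
    * (2^-1)%:E)%E.

From HB Require Import structures.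
From mathcomp Require Import all_boot all_order all_algebra.
From mathcomp Require Import all_classical all_reals.
From mathcomp Require Import ereal esum.
From mathcomp Require Import ring lra.
Import Order.TTheory GRing.Theory Num.Theory.
Set Implicit Arguments. Unset Strict Implicit. Unset Printing Implicit Defensive.
Local Open Scope ring_scope.

(* Along any realization of the clocks, m_t stays a probability distribution
   supported on the finitely many vertices touched so far, so the bound is
   deterministic: neither the bounded degree nor t plays any role.
   Since Q = sum_v m(v) * m(v) is an m-weighted average of m, some vertex x has
   mass >= Q, and Q >= 2/n forces a vertex y of mass < Q/2.  Follow a simple
   path from x towards y up to its first vertex of mass < Q/2: the k vertices
   before it each carry mass >= Q/2, so k <= 2/Q, while the mass drops by at
   least Q/2 along these k edges.  Cauchy-Schwarz gives
   (Q/2)^2 <= k E <= (2/Q) E, i.e. E >= Q^3/8. *)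

Lemma ler_sum_subset (I : eqType) (R : numDomainType) (s s' : seq I) (F : I -> R) :
  uniq s -> uniq s' -> {subset s <= s'} -> (forall i, i \in s' -> 0 <= F i) ->
  \sum_(i <- s) F i <= \sum_(i <- s') F i.
Proof.
move=> us us' ss' F0; rewrite [leRHS](bigID (mem s)) /= -[leLHS]addr0.
have -> : \sum_(i <- s' | i \in s) F i = \sum_(i <- s) F i.
  rewrite -big_filter; apply/perm_big/uniq_perm; rewrite ?filter_uniq // => i.
  by rewrite mem_filter andb_idr //; apply: ss'.
by rewrite lerD2l big_seq_cond sumr_ge0 // => i /andP[/F0].
Qed.

Lemma sqr_sum_le (I : Type) (R : realFieldType) (s : seq I) (F : I -> R) :
  (\sum_(i <- s) F i) ^+ 2 <= (size s)%:R * \sum_(i <- s) F i ^+ 2.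
Proof.
elim: s => [|i s IH]; first by rewrite !big_nil expr0n /= mul0r.
rewrite !big_cons /= -nat1r.
have Q0 : 0 <= \sum_(j <- s) F j ^+ 2 by apply: sumr_ge0 => j _; apply: sqr_ge0.
set n : R := (size s)%:R in IH *; set S := \sum_(j <- s) F j in IH *.
set Q := \sum_(j <- s) F j ^+ 2 in IH Q0 *.
have n0 : 0 <= n by apply: ler0n.
have [n_eq0|n_gt0] := eqVneq n 0.
  rewrite n_eq0 mul0r in IH *.
  have -> : S = 0 by apply/eqP; rewrite -sqrf_eq0 eq_le IH sqr_ge0.
  lra.
have np : 0 < n by rewrite lt_def n_gt0.
suff : 0 <= n * ((1 + n) * (F i ^+ 2 + Q) - (F i + S) ^+ 2) by rewrite pmulr_rge0 // subr_ge0.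
(* With a = F i: n ((1 + n) (a^2 + Q) - (a + S)^2) = (n a - S)^2 + (1 + n) (n Q - S^2). *)
have : 0 <= (n * F i - S) ^+ 2 by apply: sqr_ge0.
nra.
Qed.

Lemma exists_max_seq (T : eqType) (R : realDomainType) (f : T -> R) (s : seq T) :
  s != [::] -> exists2 x, x \in s & {in s, forall y, f y <= f x}.
Proof.
elim: s => [//|z s IH] _; have [->|/IH [x xs xmax]] := eqVneq s [::].
  by exists z; rewrite ?mem_head // => y; rewrite inE => /eqP->.
have [zx|xz] := leP (f z) (f x).
  by exists x; rewrite ?inE ?xs ?orbT // => y; rewrite inE => /predU1P[->|/xmax].
exists z; rewrite ?mem_head // => y; rewrite inE => /predU1P[->//|/xmax yx].
exact/(le_trans yx)/ltW.
Qed.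

Lemma path_first_exit (T : eqType) (P : pred T) (x : T) (q : seq T) :
  ~~ P x -> P (last x q) ->
  exists r, [/\ prefix r q, P (last x r) & all (predC P) (belast x r)].
Proof.
elim: q x => [|z q IH] x nPx /=; first by rewrite (negbTE nPx).
have [Pz _|nPz /(IH z nPz) [r [rq Pr rnP]]] := boolP (P z).
  by exists [:: z]; rewrite /= eqxx prefix0s nPx.
by exists (z :: r); rewrite /= eqxx rq nPx.
Qed.

Section Walks.
Variables (V : Type) (R : realFieldType) (m : V -> R).

Definition walk_steps (x : V) (r : seq V) : seq (V * V) := zip (x :: r) r.

Definition walk_energy (x : V) (r : seq V) : R :=
  \sum_(p <- walk_steps x r) (m p.1 - m p.2) ^+ 2.

(* Each step in both orientations, as [Esum] halves a sum over ordered pairs. *)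
Fixpoint walk_darts (x : V) (r : seq V) : seq (V * V) :=
  if r is z :: r' then (x, z) :: (z, x) :: walk_darts z r' else [::].

Lemma size_walk_steps x r : size (walk_steps x r) = size r.
Proof. by rewrite size_zip /= (minn_idPr (leqnSn _)). Qed.

Lemma sum_walk_steps x r :
  \sum_(p <- walk_steps x r) (m p.1 - m p.2) = m x - m (last x r).
Proof.
elim: r x => [|z r IH] x; first by rewrite big_nil subrr.
by rewrite /walk_steps /= big_cons IH /= addrA subrK.
Qed.

Lemma walk_energy_ge x r : (m x - m (last x r)) ^+ 2 <= (size r)%:R * walk_energy x r.
Proof. by rewrite -sum_walk_steps -(size_walk_steps x) sqr_sum_le. Qed.

Lemma sum_walk_darts x r :
  \sum_(p <- walk_darts x r) (m p.1 - m p.2) ^+ 2 = 2 * walk_energy x r.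
Proof.
rewrite /walk_energy /walk_steps; elim: r x => [|z r IH] x /=.
  by rewrite !big_nil mulr0.
rewrite !big_cons IH /=; ring.
Qed.

End Walks.

Section WalkDarts.
Variables (V : eqType) (adj : rel V).

Lemma mem_walk_darts (x : V) r p :
  p \in walk_darts x r -> (p.1 \in x :: r) && (p.2 \in x :: r).
Proof.
elim: r x => [//|z r IH] x /=; rewrite !inE.
case/predU1P=> [->|/predU1P[->|/IH]] /=; rewrite ?eqxx ?orbT //.
by rewrite !inE => /andP[-> ->]; rewrite !orbT.
Qed.

Lemma walk_darts_uniq (x : V) r : uniq (x :: r) -> uniq (walk_darts x r).
Proof.
elim: r x => [//|z r IH] x /= /andP[xzr /[dup] /andP[_ ur] /IH ->].
have x_out p : p \in walk_darts z r -> (p.1 != x) && (p.2 != x).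
  by move=> /mem_walk_darts /andP[p1 p2]; apply/andP; split;
    apply: contraNneq xzr => <-.
rewrite !inE /= negb_or xpair_eqE andbT.
have xz : x != z by apply: contraNneq xzr => ->; apply: mem_head.
by rewrite (negbTE xz) /=; apply/andP; split; apply/negP => /x_out;
  rewrite eqxx ?andbF.
Qed.

Lemma walk_darts_adj (x : V) r : symmetric adj -> path adj x r ->
  {in walk_darts x r, forall p, adj p.1 p.2}.
Proof.
move=> adj_sym; elim: r x => [//|z r IH] x /= /andP[xz zr] p.
by rewrite !inE => /predU1P[->|/predU1P[->|/(IH _ zr)]] //=; rewrite adj_sym.
Qed.

End WalkDarts.

Section ExtendedSums.
Local Open Scope classical_set_scope.
Local Open Scope ereal_scope.
Variables (R : realType) (T : choiceType).

Lemma esum_ge_seq (A : set T) (f : T -> R) (s : seq T) :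
  uniq s -> {subset s <= A} -> (\sum_(x <- s) f x)%:E <= \esum_(x in A) (f x)%:E.
Proof.
move=> us sA; apply: esum_ge; exists [set` s]; last by rewrite -fsbig_seq // sumEFin.
by split=> [|x /sA]; [apply: finite_seq | rewrite in_setE].
Qed.

Lemma esum_supported_seq (f : T -> R) (s : seq T) :
  uniq s -> (forall x, x \notin s -> f x = 0%R) -> (forall x, (0 <= f x)%R) ->
  \esum_(x in [set: T]) (f x)%:E = (\sum_(x <- s) f x)%:E.
Proof.
move=> us f_out f0; rewrite -sumEFin fsbig_seq // -esum_fset; last 2 first.
- exact: finite_seq.
- by move=> x _; rewrite lee_fin.
rewrite [RHS]esum_mkcond; apply: eq_esum => x _.
by rewrite mem_setE; case: ifPn => // /f_out ->.
Qed.

End ExtendedSums.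

Lemma walk_energy_le_Esum (R : realType) (V : choiceType) (adj : rel V) (m : V -> R)
    (x : V) (r : seq V) :
  symmetric adj -> path adj x r -> uniq (x :: r) ->
  ((walk_energy m x r)%:E <= Esum adj m)%E.
Proof.
move=> adj_sym xr ur; rewrite /Esum -(@mulfK _ 2 _ (walk_energy m x r)) ?pnatr_eq0 // EFinM.
apply: lee_wpmul2r; first by rewrite lee_fin invr_ge0.
rewrite mulrC -sum_walk_darts; apply: esum_ge_seq; first exact: walk_darts_uniq.
by move=> p /(walk_darts_adj adj_sym xr); rewrite in_setE.
Qed.

Definition distribution_on (V : eqType) (R : numDomainType) (S : seq V) (m : V -> R) :=
  [/\ forall v, 0 <= m v, forall v, v \notin S -> m v = 0 & \sum_(v <- S) m v = 1].

Section Distributions.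
Variables (V : eqType) (R : numDomainType) (S : seq V) (m : V -> R).
Hypotheses (S_uniq : uniq S) (m_distr : distribution_on S m).

Lemma distribution_sum_le1 (B : seq V) : uniq B -> \sum_(v <- B) m v <= 1.
Proof.
have [m0 m_out <-] := m_distr; move=> uB.
rewrite (bigID (mem S)) /= [X in _ + X]big1 ?addr0; last exact: m_out.
rewrite -big_filter; apply: ler_sum_subset; rewrite ?filter_uniq // => v.
by rewrite mem_filter => /andP[].
Qed.

Lemma distribution_le1 v : m v <= 1.
Proof. by have := distribution_sum_le1 (erefl : uniq [:: v]); rewrite big_seq1. Qed.

Lemma distribution_size_heavy_le1 (B : seq V) c :
  uniq B -> {in B, forall v, c <= m v} -> (size B)%:R * c <= 1.
Proof.
move=> uB heavyB; apply: le_trans (distribution_sum_le1 uB).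
rewrite mulr_natl -iter_addr_0 -count_predT -big_const_seq.
by rewrite big_seq [leRHS]big_seq; apply: ler_sum.
Qed.

End Distributions.

Lemma sum_seq_indicator (I : eqType) (R : nzRingType) (s : seq I) (x : I) :
  uniq s -> x \in s -> \sum_(w <- s) ((w == x)%:R : R) = 1.
Proof.
by move=> us xs; rewrite (bigD1_seq x) //= eqxx big1 ?addr0 // => w /negbTE ->.
Qed.

Section RingEdge.
Variables (V : eqType) (R : realType) (m : V -> R) (e : V * V).

Lemma ring_edge_increment w : e.1 != e.2 ->
  ring_edge m e w - m w = ((w == e.1)%:R - (w == e.2)%:R) * ((m e.2 - m e.1) / 2).
Proof.
move=> e12; rewrite /ring_edge.
have [->|w1] := eqVneq w e.1; first by rewrite (negbTE e12) /=; field.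
by have [->|w2] := eqVneq w e.2; rewrite /=; field.
Qed.

Lemma ring_edge_distribution (S : seq V) :
  uniq S -> e.1 \in S -> e.2 \in S -> e.1 != e.2 ->
  distribution_on S m -> distribution_on S (ring_edge m e).
Proof.
move=> uS e1S e2S e12 [m0 m_out m1]; split.
- by move=> w; rewrite /ring_edge; case: ifP => // _; rewrite divr_ge0 ?addr_ge0.
- move=> w wS; rewrite /ring_edge ifN ?m_out //.
  by rewrite negb_or; apply/andP; split; apply: contraNneq wS => ->.
- apply/eqP; rewrite -m1 -subr_eq0 -sumrB.
  under eq_bigr do rewrite ring_edge_increment //.
  by rewrite -mulr_suml sumrB !sum_seq_indicator // subrr mul0r.
Qed.

End RingEdge.

Lemma frag_state_distribution (V : eqType) (R : realType) (o : V)
    (ev : seq (R * (V * V))) (S : seq V) :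
  uniq S -> o \in S ->
  (forall a, a \in ev -> [/\ a.2.1 \in S, a.2.2 \in S & a.2.1 != a.2.2]) ->
  distribution_on S (frag_state o ev).
Proof.
move=> uS oS; elim/last_ind: ev => [_|ev a IH ev_ok].
  split=> [v|v vS|]; rewrite /frag_state /m_init /=.
  - by case: ifP.
  - by rewrite ifN //; apply: contraNneq vS => ->.
  - by rewrite -[RHS](sum_seq_indicator R uS oS); apply: eq_bigr => v _; case: ifP.
have [a1S a2S a12] : [/\ a.2.1 \in S, a.2.2 \in S & a.2.1 != a.2.2].
  by apply: ev_ok; rewrite mem_rcons mem_head.
rewrite /frag_state foldl_rcons; apply: ring_edge_distribution => //.
by apply: IH => b bev; apply: ev_ok; rewrite mem_rcons in_cons bev orbT.
Qed.

Section EnergyBound.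
Variables (R : realType) (V : choiceType) (S : seq V) (m : V -> R).
Hypotheses (S_uniq : uniq S) (m_distr : distribution_on S m).

Local Notation q := (\sum_(v <- S) m v ^+ 2).

Lemma Qsum_distribution : Qsum m = q%:E.
Proof.
have [_ m_out _] := m_distr; apply: esum_supported_seq => // v; last exact: sqr_ge0.
by move/m_out ->; rewrite expr0n.
Qed.

Lemma sum_sqr_distribution_gt0 : 0 < q.
Proof.
have [_ _ m1] := m_distr; have := sqr_sum_le S m; rewrite m1 expr1n => q_ge.
rewrite lt_def sumr_ge0 ?andbT => [|v _]; last exact: sqr_ge0.
by apply: contraTneq q_ge => ->; rewrite mulr0 ler10.
Qed.

Lemma exists_heavy_vertex : exists x, q <= m x.
Proof.
have [m0 _ m1] := m_distr.
have S_neq0 : S != [::] by apply: contra_eq_neq m1 => ->; rewrite big_nil eq_sym oner_neq0.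
have [x _ xmax] := exists_max_seq m S_neq0; exists x.
rewrite -[m x]mul1r -m1 mulr_suml big_seq [leRHS]big_seq.
by apply: ler_sum => v vS; rewrite expr2 ler_wpM2l ?xmax.
Qed.

Lemma exists_light_vertex : Q_ge_2_over_n V (Qsum m) -> exists y, m y < q / 2.
Proof.
(* Otherwise all masses lie in [q/2, 1], so V = S and
   0 <= sum_v (m v - q/2) (1 - m v) = 1 - (size S + 1) q/2 contradicts q size S >= 2. *)
move=> hQ; apply/not_existsP => not_light; have [_ m_out m1] := m_distr.
have q_gt0 := sum_sqr_distribution_gt0.
have heavy v : q / 2 <= m v by rewrite leNgt; apply/negP/not_light.
have S_full v : v \in S.
  apply/negPn/negP => /m_out mv0; have := heavy v; rewrite mv0; lra.
have := hQ S S_uniq S_full; rewrite Qsum_distribution -EFinM lee_fin => nq_ge2.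
have : 0 <= \sum_(v <- S) (m v - q / 2) * (1 - m v).
  apply: sumr_ge0 => v _; apply: mulr_ge0; rewrite subr_ge0 ?heavy //.
  exact: (distribution_le1 S_uniq m_distr).
have expand v : (m v - q / 2) * (1 - m v) = (1 + q / 2) * m v - m v ^+ 2 - q / 2.
  by ring.
rewrite (eq_bigr _ (fun v _ => expand v)) !sumrB -mulr_sumr m1.
rewrite big_const_seq count_predT iter_addr_0 -mulr_natr; nra.
Qed.

Lemma Esum_ge_Qsum_cube (adj : rel V) :
  symmetric adj -> connected_graph adj -> Q_ge_2_over_n V (Qsum m) ->
  (Qsum m ^+ 3 * (8^-1)%:E <= Esum adj m)%E.
Proof.
move=> adj_sym adj_conn hQ; have q_gt0 := sum_sqr_distribution_gt0.
have [x heavy_x] := exists_heavy_vertex; have [y light_y] := exists_light_vertex hQ.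
have [s [xs sy]] := adj_conn x y; move: sy; case: (shortenP xs) => {xs}s xs us _ sy.
have x_not_light : ~~ (m x < q / 2) by rewrite -leNgt; lra.
have light_end : m (last x s) < q / 2 by rewrite sy.
have [r [rs light_r heavy_r]] :=
  path_first_exit (P := fun v => m v < q / 2) x_not_light light_end.
have xr : path adj x r := prefix_path rs xs.
have ur : uniq (x :: r) by apply: prefix_uniq us; rewrite prefix_cons eqxx.
have size_r : (size r)%:R * (q / 2) <= 1.
  rewrite -(size_belast x r); apply: (distribution_size_heavy_le1 S_uniq m_distr).
    by move: ur; rewrite lastI rcons_uniq => /andP[].
  by move=> v /(allP heavy_r) /=; rewrite -leNgt.
have := walk_energy_ge m x r; have := walk_energy_le_Esum m adj_sym xr ur.
set W := walk_energy m x r => W_le_Esum W_ge.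
rewrite Qsum_distribution -EFin_expe -EFinM; apply: le_trans W_le_Esum; rewrite lee_fin.
have W_ge0 : 0 <= W by apply: sumr_ge0 => p _; apply: sqr_ge0.
have gap : q / 2 <= m x - m (last x r) by lra.
set n : R := (size r)%:R in size_r W_ge.
have sqr_gap : q ^+ 2 / 4 <= n * W by apply: le_trans W_ge; nra.
nra.
Qed.

End EnergyBound.

Theorem lemma2p1 (R : realType) (V : choiceType) (adj : rel V) (o : V)
  (t : R) (ev : seq (R * (V * V))) :
  simple_graph adj -> connected_graph adj -> bounded_degree adj ->
  0 < t -> ring_record adj t ev ->
  Q_ge_2_over_n V (Qsum (frag_state o ev)) ->
  (Esum adj (frag_state o ev) >= (Qsum (frag_state o ev)) ^+ 3 * (8^-1)%:E)%E.
Proof.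
move=> [adj_sym adj_irr] adj_conn _ _ [_ ev_edges].
set S := undup (o :: [seq a.2.1 | a <- ev] ++ [seq a.2.2 | a <- ev]).
have ev_S a : a \in ev -> [/\ a.2.1 \in S, a.2.2 \in S & a.2.1 != a.2.2].
  move=> aev; have [_ a_adj] := ev_edges a aev.
  rewrite !mem_undup !inE !mem_cat !(map_f _ aev) !orbT; split=> //.
  by apply: contraTneq a_adj => ->; rewrite adj_irr.
have S_uniq : uniq S := undup_uniq _.
apply: (Esum_ge_Qsum_cube S_uniq) => //.
by apply: frag_state_distribution; rewrite // mem_undup mem_head.
Qed.
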